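(* Let $V$ be a finite-dimensional real representation of $\mathbb Z/3$, and write $V\cong m\mathbf 1\oplus n\mathbf 2$. Then $V$ has a basis that is $\mathbb Z/3$-invariant up to sign if and only if $m\ge n$.
   Context: $\mathbf 1$ denotes the trivial one-dimensional real representation of $\mathbb Z/3$ and $\mathbf 2$ the two-dimensional real representation in which a generator acts by rotation by $120^\circ$; every finite-dimensional real $\mathbb Z/3$-representation is isomorphic to $m\mathbf 1\oplus n\mathbf 2$ for unique $m,n\ge0$. A basis is $G$-invariant up to sign if every $g\in G$ maps every basis element to plus or minus a basis element. *)

From HB Require Import structures.
From mathcomp Require Import all_boot all_order all_algebra.
From mathcomp Require Import reals.
Set Implicit Arguments. Unset Strict Implicit. Unset Printing Implicit Defensive.
Import Order.TTheory GRing.Theory Num.Theory.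
Local Open Scope ring_scope.

(* Vectors of V = R^d are row vectors; the generator of Z/3 acts by v |-> v *m g,
   so the element k of Z/3 (k = 0,1,2) acts by v |-> v *m g ^+ k. *)

Definition rot120 (R : rcfType) : 'M[R]_2 :=
  \matrix_(i < 2, j < 2)
    (if i == j then - (1 / 2%:R)
     else if (i : nat) == 1%N then Num.sqrt 3%:R / 2%:R
     else - (Num.sqrt 3%:R / 2%:R)).

Definition rotdiag (R : rcfType) (n : nat) : 'M[R]_(2 * n) :=
  \matrix_(i < 2 * n, j < 2 * n)
    (if (i %/ 2 == j %/ 2)%N
     then rot120 R (inord (i %% 2)) (inord (j %% 2)) else 0).

(* the standard model of m1 (+) n2 : generator acts by diag(1_m, rot120, ..., rot120) *)
Definition stdrep (R : rcfType) (m n : nat) : 'M[R]_(m + 2 * n) :=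
  block_mx 1%:M 0 0 (rotdiag R n).

Definition inv_up_to_sign_basis (R : rcfType) (d : nat) (g B : 'M[R]_d) : Prop :=
  B \in unitmx /\
  forall (k : 'I_3) (i : 'I_d), exists (j : 'I_d) (s : bool),
    row i B *m g ^+ k = (-1) ^+ s *: row j B.

From HB Require Import structures.
From mathcomp Require Import all_boot all_order all_algebra.
From mathcomp Require Import reals zify ring lra.
Import Order.TTheory GRing.Theory Num.Theory.
Set Implicit Arguments. Unset Strict Implicit. Unset Printing Implicit Defensive.
Local Open Scope ring_scope.

(* If the rows of B are permuted up to sign by g, the matrix of g in the basis B
   is a signed permutation matrix.  A diagonal entry -1 would be a basis vector v
   with v g = -v, which g^3 = 1 forbids; hence tr g >= 0, while tr g = m - n.
   Conversely, 1 (+) 2 is the permutation representation of Z/3 on R^3: with e a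
   fixed vector and u a unit vector of the plane, the orbit e + u, e + u r, e + u r^2
   under the rotation r is a basis.  When n <= m, pairing each copy of 2 with its
   own copy of 1 and keeping the m - n remaining fixed vectors gives a basis whose
   rows the generator permutes. *)

Section SignedPermutationTrace.
Variables (R : rcfType) (d : nat).
Implicit Types (g B : 'M[R]_d) (v : 'rV[R]_d).

Lemma mulmx_exp_eigen v g (a : R) k : v *m g = a *: v -> v *m g ^+ k = a ^+ k *: v.
Proof.
move=> hv; elim: k => [|k IH]; first by rewrite expr0 -idmxE mulmx1 scale1r.
by rewrite exprSr -mulmxE mulmxA IH -scalemxAl hv scalerA -exprSr.
Qed.

Lemma anti_fixed_row_eq0 v g k : odd k -> g ^+ k = 1%:M -> v *m g = - v -> v = 0.
Proof.
move=> ok gk1 hv.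
have := mulmx_exp_eigen k (etrans hv (esym (scaleN1r v))).
rewrite gk1 mulmx1 -signr_odd ok expr1 scaleN1r => /eqP.
by rewrite -addr_eq0 -mulr2n -scaler_nat scaler_eq0 pnatr_eq0 => /eqP.
Qed.

Lemma unitmx_row_neq0 B i : B \in unitmx -> row i B != 0.
Proof.
move=> uB; apply/eqP => Bi0.
have := congr1 (fun M => row i M 0 i) (mulmxV uB).
by rewrite /= row_mul Bi0 mul0mx row1 !mxE !eqxx => /eqP; rewrite eq_sym oner_eq0.
Qed.

Lemma mxtrace_conj g P : P \in unitmx -> \tr (invmx P *m g *m P) = \tr g.
Proof. by move=> uP; rewrite mxtrace_mulC mulmxA mulmxV // mul1mx. Qed.

Lemma conj_signed_row_diag g B i j (s : bool) : B \in unitmx ->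
  row i B *m g = (-1) ^+ s *: row j B ->
  (B *m g *m invmx B) i i = (-1) ^+ s * (i == j)%:R.
Proof.
move=> uB hij.
have -> : (B *m g *m invmx B) i i = row i (B *m g *m invmx B) 0 i.
  by rewrite [RHS]mxE.
by rewrite !row_mul hij -scalemxAl -row_mul mulmxV // row1 !mxE eqxx eq_sym.
Qed.

Lemma inv_up_to_sign_basis_tr_ge0 g B :
  g ^+ 3 = 1%:M -> inv_up_to_sign_basis g B -> 0 <= \tr g.
Proof.
move=> g3 [uB hB].
have uBi : invmx B \in unitmx by rewrite unitmx_inv.
rewrite -(mxtrace_conj g uBi) invmxK.
apply: sumr_ge0 => i _; have [j [s]] := hB 1 i; rewrite expr1 => hij.
rewrite (conj_signed_row_diag uB hij); case: eqVneq => [eij|]; last by rewrite mulr0.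
case: s hij => hij; last by rewrite mulr1.
rewrite -eij scaleN1r in hij.
by have := unitmx_row_neq0 i uB; rewrite (anti_fixed_row_eq0 _ g3 hij) ?eqxx.
Qed.

End SignedPermutationTrace.

Section RowPermutation.
Variables (R : rcfType) (d : nat).
Implicit Types (g B P : 'M[R]_d).

Definition permutes_rows g B := forall i, exists j, row i B *m g = row j B.

Lemma permutes_rows_exp g B k : permutes_rows g B -> permutes_rows (g ^+ k) B.
Proof.
move=> gB; elim: k => [|k IH] i; first by exists i; rewrite expr0 -idmxE mulmx1.
have [j hj] := IH i; have [j' hj'] := gB j.
by exists j'; rewrite exprSr -mulmxE mulmxA hj.
Qed.

Lemma permutes_rows_basis g B :
  B \in unitmx -> permutes_rows g B -> inv_up_to_sign_basis g B.
Proof.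
move=> uB gB; split=> // k i; have [j hj] := permutes_rows_exp k gB i.
by exists j, false; rewrite expr0 scale1r.
Qed.

Lemma permutes_rows_conj g B P :
  P \in unitmx -> permutes_rows g B -> permutes_rows (invmx P *m g *m P) (B *m P).
Proof.
move=> uP gB i; have [j hj] := gB i.
by exists j; rewrite !row_mul !mulmxA -(mulmxA _ P) mulmxV // mulmx1 hj.
Qed.

End RowPermutation.

Section Rotation.
Variable R : rcfType.
Local Notation r := (rot120 R).

Lemma rot120_char : r ^+ 2 + r + 1 = 0.
Proof.
have s3 : Num.sqrt (3%:R : R) ^+ 2 = 3%:R by rewrite sqr_sqrtr // ler0n.
rewrite expr2 -mulmxE; apply/matrixP => i j; rewrite !mxE !big_ord_recl big_ord0 !mxE.
by case: i j => [[|[|//]] ?] [[|[|//]] ?] /=; rewrite expr2 in s3; nra.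
Qed.

Lemma rot120_cube : r ^+ 3 = 1.
Proof.
have r2 : r ^+ 2 = - r - 1 by apply/eqP; rewrite -opprD -addr_eq0 addrA rot120_char.
by rewrite exprS r2 mulrBr mulrN mulr1 -expr2 r2 opprB opprK addrK.
Qed.

Definition rot120_orbit (k : nat) : 'rV[R]_2 := 'e_0 *m r ^+ k.

Lemma rot120_orbitS k : rot120_orbit k *m r = rot120_orbit k.+1.
Proof. by rewrite -mulmxA mulmxE -exprSr. Qed.

Lemma rot120_orbit3 : rot120_orbit 3 = rot120_orbit 0.
Proof. by rewrite /rot120_orbit rot120_cube expr0. Qed.

Lemma rot120_orbit_sum : rot120_orbit 0 + rot120_orbit 1 + rot120_orbit 2 = 0.
Proof.
by rewrite /rot120_orbit -!mulmxDr expr0 expr1 addrC [1 + _]addrC addrA rot120_char mulmx0.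
Qed.

Lemma rot120_orbit_span (y : 'rV[R]_2) :
  exists a b : R, y = a *: rot120_orbit 0 + b *: rot120_orbit 1.
Proof.
have s0 : Num.sqrt (3%:R : R) != 0 by rewrite sqrtr_eq0 -ltNge ltr0n.
exists (y 0 0 - y 0 1 / Num.sqrt 3%:R), (- (2%:R * y 0 1 / Num.sqrt 3%:R)).
rewrite /rot120_orbit expr0 expr1 -idmxE mulmx1 -rowE; apply/rowP => j.
rewrite !mxE; case: j => [[|[|//]] ?] /=.
  by rewrite (_ : Ordinal _ = 0); [field | apply: val_inj].
by rewrite (_ : Ordinal _ = 1); [field | apply: val_inj].
Qed.

End Rotation.

Section BlockRows.
Variables (R : rcfType) (n : nat).

Definition block_row (t : nat) (x : 'rV[R]_2) : 'rV[R]_(2 * n) :=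
  \row_(c < 2 * n) (if (c %/ 2 == t)%N then x 0 (inord (c %% 2)) else 0).

Fact block_row_is_linear t : linear (block_row t).
Proof.
move=> a x y; apply/rowP => c; rewrite !mxE; case: ifP => _; rewrite ?mxE //.
by rewrite mulr0 addr0.
Qed.

HB.instance Definition _ t := GRing.isLinear.Build R 'rV[R]_2 'rV[R]_(2 * n) _
  (block_row t) (block_row_is_linear t).

Lemma inord_mod2 (k : nat) : nat_of_ord (inord (k %% 2) : 'I_2) = (k %% 2)%N.
Proof. by rewrite inordK // ltn_mod. Qed.

Lemma block_row_delta (c : 'I_(2 * n)) : block_row (c %/ 2) 'e_(inord (c %% 2)) = 'e_c.
Proof.
apply/rowP => c'; rewrite !mxE /=.
have -> : (c' == c) = (c' %/ 2 == c %/ 2)%N && (c' %% 2 == c %% 2)%N.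
  apply/eqP/andP => [-> // | [/eqP e1 /eqP e2]].
  by apply: val_inj; rewrite /= (divn_eq c' 2) (divn_eq c 2) e1 e2.
by case: eqP => _ //; rewrite -val_eqE /= !inord_mod2.
Qed.

Lemma row_rotdiag (c : 'I_(2 * n)) :
  row c (rotdiag R n) = block_row (c %/ 2) (row (inord (c %% 2)) (rot120 R)).
Proof. by apply/rowP => c'; rewrite !mxE eq_sym; case: ifP => _; rewrite ?mxE. Qed.

Lemma block_row_rot t x : (t < n)%N ->
  block_row t x *m rotdiag R n = block_row t (x *m rot120 R).
Proof.
move=> tn; rewrite {1}(row_sum_delta x) !linear_sum mulmx_suml mulmx_sum_row linear_sum.
apply: eq_bigr => j _; rewrite !linearZ -scalemxAl; congr (_ *: _).
have jn : (2 * t + j < 2 * n)%N by have := ltn_ord j; lia.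
have tE : ((2 * t + j) %/ 2 = t)%N by have := ltn_ord j; lia.
have jE : inord ((2 * t + j) %% 2) = j.
  by apply: val_inj => /=; rewrite inord_mod2; have := ltn_ord j; lia.
have := block_row_delta (Ordinal jn); rewrite /= tE jE => ->.
by rewrite -rowE row_rotdiag /= tE jE.
Qed.

End BlockRows.

Section StandardModel.
Variables (R : rcfType) (m n : nat).
Local Notation std := (stdrep R m n).

Lemma mxtrace_stdrep : \tr std = m%:R - n%:R.
Proof.
rewrite /stdrep mxtrace_block mxtrace1.
have -> : \tr (rotdiag R n) = \sum_(i < 2 * n) (- (1 / 2%:R) : R).
  by apply: eq_bigr => i _; rewrite !mxE eqxx /= eqxx.
have h2 : (- (1 / 2%:R) : R) *+ 2 = -1 by rewrite -mulr_natr; field.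
by rewrite sumr_const card_ord mulrnA h2 mulNrn.
Qed.

Lemma stdrep_row_mx (a : 'rV[R]_m) b : row_mx a b *m std = row_mx a (b *m rotdiag R n).
Proof. by rewrite mul_row_block !mulmx0 mulmx1 addr0 add0r. Qed.

Definition delta_row (t : nat) : 'rV[R]_m := \row_(j < m) (j == t :> nat)%:R.

Lemma delta_row_ord (c : 'I_m) : delta_row c = 'e_c.
Proof. by apply/rowP => j; rewrite !mxE. Qed.

Definition orbit_row (t k : nat) : 'rV[R]_(m + 2 * n) :=
  row_mx (delta_row t) (block_row n t (rot120_orbit R k)).

Lemma orbit_rowS t k : (t < n)%N -> orbit_row t k *m std = orbit_row t k.+1.
Proof. by move=> tn; rewrite stdrep_row_mx block_row_rot // rot120_orbitS. Qed.

(* Row t < n starts the orbit of the t-th pair 1 (+) 2, rows m + 2t and m + 2t + 1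
   complete it; rows n <= i < m are the unpaired fixed vectors. *)
Definition std_basis_row (i : nat) : 'rV[R]_(m + 2 * n) :=
  if (i < n)%N then orbit_row i 0
  else if (i < m)%N then row_mx (delta_row i) 0
  else orbit_row ((i - m) %/ 2) ((i - m) %% 2).+1.

Definition std_basis : 'M[R]_(m + 2 * n) := \matrix_(i < m + 2 * n) std_basis_row i.

Hypothesis nm : (n <= m)%N.

Lemma std_basis_row_orbit t k : (t < n)%N -> (k < 2)%N ->
  std_basis_row (m + 2 * t + k) = orbit_row t k.+1.
Proof.
move=> tn k2; rewrite /std_basis_row ifN; last by rewrite -leqNgt; lia.
rewrite ifN; last by rewrite -leqNgt; lia.
have -> : ((m + 2 * t + k - m) %/ 2 = t)%N by lia.
by have -> : ((m + 2 * t + k - m) %% 2 = k)%N by lia.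
Qed.

Lemma row_std_basis (i : 'I_(m + 2 * n)) : row i std_basis = std_basis_row i.
Proof. exact: rowK. Qed.

Lemma std_basis_permuted : permutes_rows std std_basis.
Proof.
move=> i; rewrite row_std_basis; have ilt := ltn_ord i.
case: (ltnP i n) => [itn | nti].
  have jlt : (m + 2 * i + 0 < m + 2 * n)%N by lia.
  exists (Ordinal jlt); rewrite row_std_basis std_basis_row_orbit //.
  by rewrite /std_basis_row itn orbit_rowS.
case: (ltnP i m) => [itm | mti].
  exists i; rewrite row_std_basis /std_basis_row ltnNge nti itm /=.
  by rewrite stdrep_row_mx mul0mx.
set t := ((i - m) %/ 2)%N; have tn : (t < n)%N by lia.
have iE : nat_of_ord i = (m + 2 * t + (i - m) %% 2)%N by lia.
rewrite iE std_basis_row_orbit ?ltn_mod // orbit_rowS //.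
case: ((i - m) %% 2)%N (ltn_mod (i - m) 2) => [_ | [_ | //]].
  have jlt : (m + 2 * t + 1 < m + 2 * n)%N by lia.
  by exists (Ordinal jlt); rewrite row_std_basis std_basis_row_orbit.
have jlt : (t < m + 2 * n)%N by lia.
exists (Ordinal jlt); rewrite row_std_basis /std_basis_row /= tn.
by rewrite /orbit_row -rot120_orbit3.
Qed.

Lemma std_basis_row_sub j : (j < m + 2 * n)%N -> (std_basis_row j <= std_basis)%MS.
Proof.
move=> jlt; rewrite -[std_basis_row j]/(std_basis_row (Ordinal jlt)).
by rewrite -row_std_basis row_sub.
Qed.

Lemma orbit_rows_span t : (t < n)%N ->
  (row_mx (delta_row t) 0 <= std_basis)%MS /\
  forall y, (row_mx 0 (block_row n t y) <= std_basis)%MS.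
Proof.
move=> tn.
have orbit_sub k : (k < 3)%N -> (orbit_row t k <= std_basis)%MS.
  case: k => [_ | k k2].
    have tm : (t < m + 2 * n)%N by lia.
    by have := std_basis_row_sub tm; rewrite /std_basis_row tn.
  rewrite -std_basis_row_orbit //; apply: std_basis_row_sub; lia.
have fixed_sub : (row_mx (delta_row t) 0 <= std_basis)%MS.
  have -> : row_mx (delta_row t) 0 =
            3%:R^-1 *: (orbit_row t 0 + orbit_row t 1 + orbit_row t 2).
    rewrite /orbit_row !add_row_mx -2!linearD rot120_orbit_sum linear0.
    rewrite scale_row_mx scaler0 -[delta_row t]scale1r -!scalerDl scalerA.
    by congr (row_mx (_ *: _) 0); field.
  by rewrite scalemx_sub // !addmx_sub // orbit_sub.
have moving_sub k : (k < 3)%N ->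
    (row_mx 0 (block_row n t (rot120_orbit R k)) <= std_basis)%MS.
  move=> k3; have -> : row_mx 0 (block_row n t (rot120_orbit R k)) =
                       orbit_row t k - row_mx (delta_row t) 0.
    by rewrite /orbit_row opp_row_mx add_row_mx subrr oppr0 addr0.
  by rewrite addmx_sub ?eqmx_opp // orbit_sub.
split=> // y; have [a [b ->]] := rot120_orbit_span y.
rewrite linearD !linearZ /=.
have -> : forall u v : 'rV[R]_(2 * n),
    row_mx (0 : 'rV[R]_m) (a *: u + b *: v) = a *: row_mx 0 u + b *: row_mx 0 v.
  by move=> u v; rewrite !scale_row_mx add_row_mx !scaler0 addr0.
by rewrite addmx_sub // scalemx_sub // moving_sub.
Qed.

Lemma std_basis_unit : std_basis \in unitmx.
Proof.
rewrite -row_full_unit -sub1mx; apply/row_subP => i; rewrite row1.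
case: (splitP i) => c ic.
  have -> : i = lshift _ c by apply: val_inj.
  rewrite delta_mx_lshift -delta_row_ord.
  case: (ltnP c n) => [cn | nc]; first by case: (orbit_rows_span cn).
  have cm : (c < m + 2 * n)%N by have := ltn_ord c; lia.
  by have := std_basis_row_sub cm; rewrite /std_basis_row ltnNge nc ltn_ord.
have -> : i = rshift _ c by apply: val_inj.
rewrite delta_mx_rshift -block_row_delta.
have cn : (c %/ 2 < n)%N by have := ltn_ord c; lia.
by case: (orbit_rows_span cn) => _ ->.
Qed.

End StandardModel.

Theorem proposition2p21 (R : realType) (m n : nat) (g : 'M[R]_(m + 2 * n))
  (hrep : g ^+ 3 = 1%:M)
  (hiso : exists P : 'M[R]_(m + 2 * n),
            P \in unitmx /\ g = invmx P *m stdrep R m n *m P) :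
  (exists B : 'M[R]_(m + 2 * n), inv_up_to_sign_basis g B) <-> (n <= m)%N.
Proof.
case: hiso => P [uP gE]; subst g; split=> [[B hB] | nm].
  have := inv_up_to_sign_basis_tr_ge0 hrep hB.
  by rewrite mxtrace_conj // mxtrace_stdrep subr_ge0 ler_nat.
exists (std_basis R m n *m P); apply: permutes_rows_basis.
  by rewrite unitmx_mul std_basis_unit.
exact: permutes_rows_conj uP (std_basis_permuted R nm).
Qed.
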